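(* Let $X_0=0$ and $X_n=\sum_{j=1}^{X_{n-1}}\xi_{n,j}+\varepsilon_n$ for $n\ge1$, where $\{\xi_{n,j},\varepsilon_n\}$ are independent nonnegative integer-valued random variables with $\xi_{n,j}$, $j\in\mathbb N$, identically distributed for each $n$. Let $G_n(x)=\mathbb E x^{\xi_{n,1}}$, $H_n(x)=\mathbb E x^{\varepsilon_n}$, $\rho_n=G_n'(1)\le 1$, and $m_{n,1}=\mathbb E\varepsilon_n$. Define $\overline G_{n+1,n}(x)=x$ and $\overline G_{j,n}(x)=G_j(\overline G_{j+1,n}(x))$ for $j\le n$. Assume $\prod_{n=2}^\infty\rho_n=\rho\in(0,1)$ and $\sum_{n=1}^\infty m_{n,1}<\infty$. Then for every $j$ and $x\in[0,1]$ the limit $\overline G_{j+1,\infty}(x)=\lim_{n\to\infty}\overline G_{j+1,n}(x)$ exists, and $X_n$ converges in distribution to a random variable $Y$ with generating function $$g(x)=\prod_{j=1}^\infty H_j\big(\overline G_{j+1,\infty}(x)\big).$$ *)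

(* classical reals. Random variables are modelled by their
   probability mass functions on nat. *)
From Stdlib Require Import Reals ClassicalEpsilon.
Open Scope R_scope.

Definition lim (u : nat -> R) : R :=
  epsilon (inhabits 0) (fun l => Un_cv u l).

Definition series (a : nat -> R) : R := lim (fun N => sum_f_R0 a N).

Definition is_pmf (p : nat -> R) : Prop :=
  (forall k, 0 <= p k) /\ infinite_sum p 1.

Definition pgf (p : nat -> R) (x : R) : R := series (fun k => p k * x ^ k).

Definition delta0 (k : nat) : R := if Nat.eqb k 0 then 1 else 0.

Definition conv (p q : nat -> R) (k : nat) : R :=
  sum_f_R0 (fun i => p i * q (k - i)%nat) k.

Fixpoint convpow (p : nat -> R) (m : nat) : nat -> R :=
  match m with
  | O => delta0
  | S m' => conv p (convpow p m')
  end.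

(* law of X_n: X_0 = 0, X_n = sum_{j=1}^{X_{n-1}} xi_{n,j} + eps_n,
   where xi_{n,j} has pmf p n and eps_n has pmf q n, all independent. *)
Fixpoint law (p q : nat -> nat -> R) (n : nat) : nat -> R :=
  match n with
  | O => delta0
  | S n' => fun k =>
      series (fun m => law p q n' m * conv (convpow (p n) m) (q n) k)
  end.

Fixpoint Gcomp (G : nat -> R -> R) (j k : nat) (x : R) : R :=
  match k with
  | O => x
  | S k' => G j (Gcomp G (S j) k' x)
  end.

(* \overline G_{j,n}(x): = x for j = n+1, = G_j(\overline G_{j+1,n}(x)) for j <= n *)
Definition Gbar (G : nat -> R -> R) (j n : nat) (x : R) : R :=
  Gcomp G j (S n - j) x.

(* finite product  prod_{i=a}^{b} f i  (empty product = 1 if b < a) *)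
Fixpoint prod_up (f : nat -> R) (a len : nat) : R :=
  match len with
  | O => 1
  | S l => f a * prod_up f (S a) l
  end.
Definition prodR (f : nat -> R) (a b : nat) : R := prod_up f a (S b - a).

From Stdlib Require Import Reals Lra Lia Psatz ClassicalEpsilon.
From Coquelicot Require Series.
Open Scope R_scope.

(* The pgf of X_n is g_n(x) = prod_{j=1}^n H_j(Gbar_{j+1,n}(x)), by induction
   on n: conditionally on X_{n-1} = m, X_n is a sum of m copies of xi_n plus
   eps_n, and mixing over m turns g_{n-1} into g_{n-1}(G_n x) * H_n(x).
   Since rho_j <= 1, every G_j lies above the identity on [0,1], so
   n |-> Gbar_{j+1,n}(x) is nondecreasing and bounded by 1; it converges.
   The mean bound 1 - H_j(y) <= m_{j,1} (1 - y) and summability of m_{j,1}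
   make the tails of the products uniformly close to 1, whence g_n converges
   on [0,1] to the infinite product g, and g(x) >= 1 - (sum m_{j,1}) (1 - x).
   A continuity theorem for pgfs then gives convergence of the point masses
   to a law y whose pgf is g; the last bound excludes loss of mass at
   infinity. *)

Lemma lim_of_cv u l : Un_cv u l -> lim u = l.
Proof.
  intro Hu. unfold lim.
  assert (Hex : exists l, Un_cv u l) by eauto.
  exact (UL_sequence _ _ _ (epsilon_spec (inhabits 0) (fun l => Un_cv u l) Hex) Hu).
Qed.

Lemma series_of_sum a l : infinite_sum a l -> series a = l.
Proof. exact (lim_of_cv (fun N => sum_f_R0 a N) l). Qed.

Lemma cv_const c : Un_cv (fun _ => c) c.
Proof.
  intros e He. exists 0%nat. intros n _. unfold R_dist.
  replace (c - c) with 0 by ring. rewrite Rabs_R0. lra.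
Qed.

Lemma cv_lim u : (exists l, Un_cv u l) -> Un_cv u (lim u).
Proof. intros [l Hl]. rewrite (lim_of_cv _ _ Hl). exact Hl. Qed.

Lemma infinite_sum_ext a b A :
  (forall k, a k = b k) -> infinite_sum a A -> infinite_sum b A.
Proof.
  intro E. apply Un_cv_ext. intro N. apply sum_eq. intros i _. apply E.
Qed.

Lemma infinite_sum_scal a A c :
  infinite_sum a A -> infinite_sum (fun k => c * a k) (c * A).
Proof.
  intro Ha. apply (Un_cv_ext (fun N => c * sum_f_R0 a N)).
  - intro N. rewrite scal_sum. apply sum_eq. intros i _. ring.
  - apply CV_mult; [apply cv_const | exact Ha].
Qed.

Lemma infinite_sum_plus a b A B :
  infinite_sum a A -> infinite_sum b B -> infinite_sum (fun k => a k + b k) (A + B).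
Proof.
  intros Ha Hb. apply (Un_cv_ext (fun N => sum_f_R0 a N + sum_f_R0 b N)).
  - intro N. symmetry. apply plus_sum.
  - apply CV_plus; assumption.
Qed.

Lemma infinite_sum_le a b A B :
  (forall k, a k <= b k) -> infinite_sum a A -> infinite_sum b B -> A <= B.
Proof.
  intros E Ha Hb. apply (Rle_cv_lim (fun N => sum_growing a b N E) Ha Hb).
Qed.

Section NonnegativeSeries.
Variable a : nat -> R.
Hypothesis a_nonneg : forall k, 0 <= a k.

Lemma infinite_sum_nonneg A : infinite_sum a A -> 0 <= A.
Proof.
  intro Ha. apply (Rle_trans _ (sum_f_R0 a 0)); [apply a_nonneg|].
  exact (sum_incr a 0 A Ha a_nonneg).
Qed.

Lemma term_le_infinite_sum A : infinite_sum a A -> forall k, a k <= A.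
Proof.
  intros Ha k. apply (Rle_trans _ (sum_f_R0 a k)); [|exact (sum_incr a k A Ha a_nonneg)].
  destruct k as [|k]; simpl; [lra|].
  pose proof (cond_pos_sum a k a_nonneg). lra.
Qed.

Lemma infinite_sum_dominated b B :
  (forall k, a k <= b k) -> infinite_sum b B -> exists A, infinite_sum a A.
Proof.
  intros Hab Hb.
  assert (H : forall k, 0 <= a k <= b k) by (intro k; split; auto).
  destruct (Rseries_CV_comp a b H (exist _ B Hb)) as [A HA]. eauto.
Qed.

Lemma infinite_sum_bounded B :
  (forall N, sum_f_R0 a N <= B) -> exists A, infinite_sum a A /\ A <= B.
Proof.
  intro HB.
  destruct (growing_cv (fun N => sum_f_R0 a N)) as [A HA].
  - intro N. simpl. specialize (a_nonneg (S N)). lra.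
  - exists B. intros z [N ->]. apply HB.
  - exists A. split; [exact HA|].
    exact (Rle_cv_lim HB HA (cv_const B)).
Qed.

End NonnegativeSeries.

Lemma sum_f_R0_cv (f : nat -> nat -> R) (l : nat -> R) K :
  (forall i, (i <= K)%nat -> Un_cv (fun n => f n i) (l i)) ->
  Un_cv (fun n => sum_f_R0 (f n) K) (sum_f_R0 l K).
Proof.
  induction K as [|K IH]; intro H; simpl.
  - apply H. lia.
  - apply CV_plus; [apply IH; intros; apply H | apply H]; lia.
Qed.

Lemma sum_f_R0_swap (u : nat -> nat -> R) M K :
  sum_f_R0 (fun k => sum_f_R0 (fun m => u m k) M) K =
  sum_f_R0 (fun m => sum_f_R0 (fun k => u m k) K) M.
Proof.
  induction K as [|K IH]; simpl; [reflexivity|].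
  rewrite IH, <- plus_sum. reflexivity.
Qed.

Lemma row_sums_bounded (u : nat -> nat -> R) (U : nat -> R) B :
  (forall m, infinite_sum (u m) (U m)) ->
  (forall M K, sum_f_R0 (fun m => sum_f_R0 (u m) K) M <= B) ->
  forall M, sum_f_R0 U M <= B.
Proof.
  intros HU HB M.
  apply (Rle_cv_lim (HB M) (sum_f_R0_cv (fun K m => sum_f_R0 (u m) K) U M
           (fun m _ => HU m)) (cv_const B)).
Qed.

Lemma tonelli (u : nat -> nat -> R) (U : nat -> R) S :
  (forall m k, 0 <= u m k) -> (forall m, infinite_sum (u m) (U m)) -> infinite_sum U S ->
  exists V, (forall k, infinite_sum (fun m => u m k) (V k)) /\ infinite_sum V S.
Proof.
  intros u_nonneg HU HS.
  assert (U_nonneg : forall m, 0 <= U m)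
    by (intro m; exact (infinite_sum_nonneg (u m) (u_nonneg m) _ (HU m))).
  assert (rectangle_le_S : forall M K, sum_f_R0 (fun m => sum_f_R0 (u m) K) M <= S).
  { intros M K. apply (Rle_trans _ (sum_f_R0 U M)); [|exact (sum_incr U M S HS U_nonneg)].
    apply sum_growing. intro m. exact (sum_incr (u m) K _ (HU m) (u_nonneg m)). }
  set (V := fun k => series (fun m => u m k)).
  assert (HV : forall k, infinite_sum (fun m => u m k) (V k)).
  { intro k.
    destruct (infinite_sum_dominated (fun m => u m k) (fun m => u_nonneg m k) U S)
      as [W HW]; [|exact HS|].
    - intro m. exact (term_le_infinite_sum (u m) (u_nonneg m) _ (HU m) k).
    - unfold V. rewrite (series_of_sum _ _ HW). exact HW. }
  assert (V_nonneg : forall k, 0 <= V k)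
    by (intro k; exact (infinite_sum_nonneg _ (fun m => u_nonneg m k) _ (HV k))).
  destruct (infinite_sum_bounded V V_nonneg S) as [T [HT T_le_S]].
  { apply (row_sums_bounded (fun k m => u m k)); [exact HV|].
    intros K M. rewrite sum_f_R0_swap. apply rectangle_le_S. }
  assert (S_le_T : S <= T).
  { assert (rectangle_le_T : forall M K, sum_f_R0 (fun m => sum_f_R0 (u m) K) M <= T).
    { intros M K. rewrite <- sum_f_R0_swap.
      apply (Rle_trans _ (sum_f_R0 V K)); [|exact (sum_incr V K T HT V_nonneg)].
      apply sum_growing. intro k.
      exact (sum_incr (fun m => u m k) M _ (HV k) (fun m => u_nonneg m k)). }
    exact (Rle_cv_lim (row_sums_bounded u U T HU rectangle_le_T) HS (cv_const T)). }
  exists V. split; [exact HV|]. replace S with T by lra. exact HT.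
Qed.

Definition has_pgf (a : nat -> R) (g : R -> R) : Prop :=
  (forall k, 0 <= a k) /\
  (forall x, 0 <= x <= 1 -> infinite_sum (fun k => a k * x ^ k) (g x)).

Lemma has_pgf_ext a g h :
  (forall x, 0 <= x <= 1 -> g x = h x) -> has_pgf a g -> has_pgf a h.
Proof. intros E [Ha Hg]. split; [exact Ha|]. intros x Hx. rewrite <- E; auto. Qed.

Lemma pow_unit_interval x k : 0 <= x <= 1 -> 0 <= x ^ k <= 1.
Proof.
  intro Hx. split; [apply pow_le; lra|].
  rewrite <- (pow1 k). apply pow_incr. lra.
Qed.

Lemma pow_diff_le x y k :
  0 <= x -> x <= y -> y <= 1 -> 0 <= y ^ k - x ^ k <= INR k * (y - x).
Proof.
  intros H0 H1 H2. induction k as [|k IH]; [simpl; lra|].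
  rewrite S_INR. simpl.
  pose proof (pow_unit_interval x k ltac:(lra)).
  pose proof (pow_unit_interval y k ltac:(lra)).
  replace (y * y ^ k - x * x ^ k) with (y * (y ^ k - x ^ k) + x ^ k * (y - x)) by ring.
  split; nra.
Qed.

Section GeneratingFunction.
Variables (a : nat -> R) (g : R -> R).
Hypothesis ga : has_pgf a g.

Lemma has_pgf_term_nonneg x k : 0 <= x <= 1 -> 0 <= a k * x ^ k.
Proof.
  intro Hx. apply Rmult_le_pos; [exact (proj1 ga k) | exact (proj1 (pow_unit_interval x k Hx))].
Qed.

Lemma has_pgf_mass : infinite_sum a (g 1).
Proof.
  apply (infinite_sum_ext (fun k => a k * 1 ^ k)); [intro k; rewrite pow1; ring|].
  apply (proj2 ga). lra.
Qed.

Lemma has_pgf_mono x y : 0 <= x -> x <= y -> y <= 1 -> g x <= g y.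
Proof.
  intros H0 H1 H2. apply (infinite_sum_le (fun k => a k * x ^ k) (fun k => a k * y ^ k)).
  - intro k. apply Rmult_le_compat_l; [exact (proj1 ga k)|]. apply pow_incr. lra.
  - apply (proj2 ga). lra.
  - apply (proj2 ga). lra.
Qed.

Lemma has_pgf_range x : g 1 = 1 -> 0 <= x <= 1 -> 0 <= g x <= 1.
Proof.
  intros g1 Hx. split.
  - exact (infinite_sum_nonneg _ (fun k => has_pgf_term_nonneg x k Hx) _ (proj2 ga x Hx)).
  - rewrite <- g1. apply has_pgf_mono; lra.
Qed.

Lemma has_pgf_mean_bound mu x y :
  infinite_sum (fun k => INR k * a k) mu ->
  0 <= x -> x <= y -> y <= 1 -> g y - g x <= mu * (y - x).
Proof.
  intros Hmu H0 H1 H2.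
  assert (Hdiff : infinite_sum (fun k => a k * y ^ k + (-1) * (a k * x ^ k)) (g y + (-1) * g x)).
  { apply infinite_sum_plus; [|apply infinite_sum_scal]; apply (proj2 ga); lra. }
  assert (Hmean : infinite_sum (fun k => (y - x) * (INR k * a k)) ((y - x) * mu))
    by (apply infinite_sum_scal; exact Hmu).
  enough (g y + (-1) * g x <= (y - x) * mu) by lra.
  refine (infinite_sum_le _ _ _ _ _ Hdiff Hmean). intro k. simpl.
  pose proof (pow_diff_le x y k H0 H1 H2). pose proof (proj1 ga k). nra.
Qed.

End GeneratingFunction.

Lemma has_pgf_of_pmf a : is_pmf a -> has_pgf a (pgf a).
Proof.
  intros [a_nonneg Ha]. split; [exact a_nonneg|]. intros x Hx.
  assert (term_nonneg : forall k, 0 <= a k * x ^ k).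
  { intro k. pose proof (pow_unit_interval x k Hx). pose proof (a_nonneg k). nra. }
  destruct (infinite_sum_dominated _ term_nonneg a 1) as [A HA].
  - intro k. pose proof (pow_unit_interval x k Hx). pose proof (a_nonneg k). nra.
  - exact Ha.
  - unfold pgf. rewrite (series_of_sum _ A HA). exact HA.
Qed.

Lemma pgf_at_1 a : is_pmf a -> pgf a 1 = 1.
Proof.
  intro Ha. apply (uniqueness_sum a); [|exact (proj2 Ha)].
  exact (has_pgf_mass _ _ (has_pgf_of_pmf a Ha)).
Qed.

Lemma mean_nonneg a mu : is_pmf a -> infinite_sum (fun k => INR k * a k) mu -> 0 <= mu.
Proof.
  intros [a_nonneg _] Hmu. refine (infinite_sum_nonneg _ _ _ Hmu).
  intro k. pose proof (pos_INR k). pose proof (a_nonneg k). nra.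
Qed.

Lemma has_pgf_delta0 : has_pgf delta0 (fun _ => 1).
Proof.
  split; [intro k; unfold delta0; destruct (Nat.eqb k 0); lra|].
  intros x _. apply (Un_cv_ext (fun _ => 1)); [|apply cv_const].
  intro N. induction N as [|N IH]; simpl; [unfold delta0; simpl; ring|].
  rewrite <- IH. unfold delta0. simpl. ring.
Qed.

(* Independent sums: the generating function of a convolution is the
   product (Cauchy product of absolutely convergent series). *)
Lemma has_pgf_conv a b g h :
  has_pgf a g -> has_pgf b h -> has_pgf (conv a b) (fun x => g x * h x).
Proof.
  intros ga hb. split.
  - intro k. unfold conv. apply cond_pos_sum. intro i.
    pose proof (proj1 ga i). pose proof (proj1 hb (k - i)%nat). nra.
  - intros x Hx.
    assert (abs_sum : forall c f, has_pgf c f ->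
              infinite_sum (fun k => Rabs (c k * x ^ k)) (f x)).
    { intros c f cf. apply (infinite_sum_ext (fun k => c k * x ^ k)); [|exact (proj2 cf x Hx)].
      intro k. symmetry. apply Rabs_pos_eq, (has_pgf_term_nonneg c f cf x k Hx). }
    apply Series.is_series_Reals.
    eapply Series.is_series_ext;
      [|apply (Series.is_series_mult (fun k => a k * x ^ k) (fun k => b k * x ^ k));
        [apply Series.is_series_Reals, (proj2 ga x Hx)
        |apply Series.is_series_Reals, (proj2 hb x Hx)
        |exists (g x); apply Series.is_series_Reals, (abs_sum a g ga)
        |exists (h x); apply Series.is_series_Reals, (abs_sum b h hb)]].
    intro k. unfold conv. simpl. rewrite Rmult_comm, scal_sum.
    apply sum_eq. intros i Hi.
    replace (x ^ k) with (x ^ i * x ^ (k - i)) by (rewrite <- pow_add; f_equal; lia).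
    ring.
Qed.

Lemma has_pgf_convpow a g m : has_pgf a g -> has_pgf (convpow a m) (fun x => g x ^ m).
Proof.
  intro ga. induction m as [|m IH]; simpl.
  - exact has_pgf_delta0.
  - exact (has_pgf_conv _ _ _ _ ga IH).
Qed.

Lemma has_pgf_mixture (a : nat -> R) (c : nat -> nat -> R) (A : R -> R)
    (C : nat -> R -> R) (F : R -> R) :
  has_pgf a A -> (forall m, has_pgf (c m) (C m)) -> (forall m, C m 1 = 1) ->
  (forall x, 0 <= x <= 1 -> infinite_sum (fun m => a m * C m x) (F x)) ->
  has_pgf (fun k => series (fun m => a m * c m k)) F.
Proof.
  intros ga hc C1 HF.
  assert (c_le_1 : forall m k, 0 <= c m k <= 1).
  { intros m k. split; [exact (proj1 (hc m) k)|]. rewrite <- (C1 m).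
    exact (term_le_infinite_sum _ (proj1 (hc m)) _ (has_pgf_mass _ _ (hc m)) k). }
  assert (coef_nonneg : forall m k, 0 <= a m * c m k).
  { intros m k. pose proof (proj1 ga m). pose proof (c_le_1 m k). nra. }
  assert (mixed_term : forall m k x, 0 <= x <= 1 -> 0 <= a m * (c m k * x ^ k)).
  { intros m k x Hx. pose proof (pow_unit_interval x k Hx). pose proof (coef_nonneg m k).
    rewrite <- Rmult_assoc. nra. }
  assert (coef_sum : forall k, infinite_sum (fun m => a m * c m k) (series (fun m => a m * c m k))).
  { intro k.
    destruct (infinite_sum_dominated (fun m => a m * c m k)
                (fun m => coef_nonneg m k) a (A 1)) as [W HW].
    - intro m. pose proof (proj1 ga m). pose proof (c_le_1 m k). nra.
    - exact (has_pgf_mass _ _ ga).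
    - rewrite (series_of_sum _ _ HW). exact HW. }
  split.
  - intro k. exact (infinite_sum_nonneg _ (fun m => coef_nonneg m k) _ (coef_sum k)).
  - intros x Hx.
    destruct (tonelli (fun m k => a m * (c m k * x ^ k)) (fun m => a m * C m x) (F x)
                (fun m k => mixed_term m k x Hx)
                (fun m => infinite_sum_scal _ _ _ (proj2 (hc m) x Hx)) (HF x Hx))
      as [V [HV HVF]].
    apply (infinite_sum_ext V); [|exact HVF]. intro k.
    apply (uniqueness_sum (fun m => a m * (c m k * x ^ k))); [exact (HV k)|].
    apply (infinite_sum_ext (fun m => x ^ k * (a m * c m k))); [intro m; ring|].
    rewrite Rmult_comm. apply infinite_sum_scal. apply coef_sum.
Qed.

Fixpoint poly_head (a : nat -> R) (x : R) (k : nat) : R :=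
  match k with
  | O => 0
  | S k => poly_head a x k + a k * x ^ k
  end.

Lemma poly_head_sum a x N : poly_head a x (S N) = sum_f_R0 (fun i => a i * x ^ i) N.
Proof.
  induction N as [|N IH]; [simpl; ring|].
  change (poly_head a x (S (S N))) with (poly_head a x (S N) + a (S N) * x ^ S N).
  rewrite IH. reflexivity.
Qed.

Lemma poly_head_cv (a : nat -> nat -> R) (l : nat -> R) x k :
  (forall i, (i < k)%nat -> Un_cv (fun n => a n i) (l i)) ->
  Un_cv (fun n => poly_head (a n) x k) (poly_head l x k).
Proof.
  induction k as [|k IH]; intro Hl; simpl; [apply cv_const|].
  apply CV_plus; [apply IH; intros; apply Hl; lia|].
  apply CV_mult; [apply Hl; lia | apply cv_const].
Qed.

Lemma poly_head_mono a x k d :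
  (forall i, 0 <= a i) -> 0 <= x <= 1 -> poly_head a x k <= poly_head a x (k + d).
Proof.
  intros a_nonneg Hx. induction d as [|d IH]; [rewrite Nat.add_0_r; lra|].
  rewrite Nat.add_succ_r. simpl.
  pose proof (a_nonneg (k + d)%nat). pose proof (pow_unit_interval x (k + d) Hx). nra.
Qed.

Section HeadBounds.
Variables (a : nat -> R) (g : R -> R).
Hypothesis ga : has_pgf a g.
Hypothesis g1 : g 1 = 1.

Lemma poly_head_le_pgf x k : 0 <= x <= 1 -> poly_head a x k <= g x.
Proof.
  intro Hx. apply (Rle_trans _ (poly_head a x (S k))).
  - simpl. pose proof (has_pgf_term_nonneg a g ga x k Hx). lra.
  - rewrite poly_head_sum.
    exact (sum_incr _ k _ (proj2 ga x Hx) (fun i => has_pgf_term_nonneg a g ga x i Hx)).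
Qed.

Lemma pgf_head_bounds x k :
  0 <= x <= 1 -> poly_head a x k <= g x <= poly_head a x k + x ^ k.
Proof.
  intro Hx. split; [exact (poly_head_le_pgf x k Hx)|].
  assert (tail : forall d, poly_head a x (k + d) - poly_head a x k <=
                            x ^ k * (poly_head a 1 (k + d) - poly_head a 1 k)).
  { induction d as [|d IH]; [rewrite Nat.add_0_r; lra|].
    rewrite Nat.add_succ_r. simpl.
    assert (x ^ (k + d) <= x ^ k).
    { rewrite pow_add. pose proof (pow_unit_interval x k Hx).
      pose proof (pow_unit_interval x d Hx). nra. }
    rewrite pow1. pose proof (proj1 ga (k + d)%nat). nra. }
  assert (head_le : forall N, poly_head a x N <= poly_head a x k + x ^ k).
  { intro N. pose proof (pow_unit_interval x k Hx).
    destruct (Nat.le_gt_cases N k) as [HN|HN].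
    - pose proof (poly_head_mono a x N (k - N) (proj1 ga) Hx) as Hmono.
      replace (N + (k - N))%nat with k in Hmono by lia. lra.
    - pose proof (tail (N - k)%nat) as Htail.
      pose proof (poly_head_le_pgf 1 (k + (N - k)) ltac:(lra)).
      pose proof (poly_head_mono a 1 0 k (proj1 ga) ltac:(lra)).
      replace (k + (N - k))%nat with N in * by lia. simpl in *. nra. }
  assert (heads_cv : Un_cv (fun N => poly_head a x (S N)) (g x)).
  { apply (Un_cv_ext (fun N => sum_f_R0 (fun i => a i * x ^ i) N)).
    - intro N. symmetry. apply poly_head_sum.
    - exact (proj2 ga x Hx). }
  exact (Rle_cv_lim (fun N => head_le (S N)) heads_cv (cv_const _)).
Qed.

End HeadBounds.

Lemma cv_of_approximations (u : nat -> R) :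
  (forall d, 0 < d ->
     exists v : nat -> R, (exists l, Un_cv v l) /\ forall n, Rabs (u n - v n) <= d) ->
  exists l, Un_cv u l.
Proof.
  intro Happrox.
  assert (Hcauchy : Cauchy_crit u).
  { intros eps Heps.
    destruct (Happrox (eps / 3) ltac:(lra)) as [v [[l Hv] Huv]].
    destruct (CV_Cauchy v (exist _ l Hv) (eps / 3) ltac:(lra)) as [N HN].
    exists N. intros n m Hn Hm. specialize (HN n m Hn Hm).
    pose proof (Huv n). pose proof (Huv m). unfold R_dist in *.
    pose proof (Rle_abs (u n - v n)). pose proof (Rle_abs (v n - u n)) as Hvu_n.
    pose proof (Rle_abs (u m - v m)). pose proof (Rle_abs (v m - u m)) as Hvu_m.
    rewrite Rabs_minus_sym in Hvu_n, Hvu_m.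
    apply Rabs_def2 in HN. apply Rabs_def1; lra. }
  destruct (R_complete u Hcauchy) as [l Hl]. eauto.
Qed.

Lemma ge_1_of_lower_bounds T K :
  0 <= T -> 0 <= K -> (forall x, 0 <= x < 1 -> 1 - K * (1 - x) <= T) -> 1 <= T.
Proof.
  intros HT0 HK Hlow. destruct (Rle_lt_dec 1 T) as [|HT]; [assumption|].
  set (delta := (1 - T) / (2 * (K + 1))).
  assert (Hdelta : delta * (2 * (K + 1)) = 1 - T) by (unfold delta; field; lra).
  assert (0 < delta) by (unfold delta; apply Rdiv_lt_0_compat; lra).
  specialize (Hlow (1 - delta) ltac:(nra)). nra.
Qed.

Section ContinuityTheorem.
Variables (a : nat -> nat -> R) (g : nat -> R -> R) (P : R -> R).
Hypothesis ga : forall n, has_pgf (a n) (g n).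
Hypothesis g1 : forall n, g n 1 = 1.
Hypothesis gP : forall x, 0 <= x <= 1 -> Un_cv (fun n => g n x) (P x).

(* Given convergence of the first k coefficients, the k-th is within x of
   (g_n(x) - sum_{i<k} a_{n,i} x^i) / x^k, which converges in n. *)
Lemma coef_cv_step k :
  (forall i, (i < k)%nat -> exists l, Un_cv (fun n => a n i) l) ->
  exists l, Un_cv (fun n => a n k) l.
Proof.
  intro IH. apply cv_of_approximations. intros d Hd.
  set (x := Rmin d 1).
  assert (Hx : 0 < x <= 1) by (unfold x; split; [apply Rmin_glb_lt; lra | apply Rmin_r]).
  assert (Hxd : x <= d) by apply Rmin_l.
  pose proof (pow_lt x k (proj1 Hx)) as Hxk.
  set (w := / x ^ k).
  assert (Hw : x ^ k * w = 1) by (unfold w; field; lra).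
  assert (0 < w) by (unfold w; apply Rinv_0_lt_compat; lra).
  exists (fun n => (g n x - poly_head (a n) x k) * w). split.
  - exists ((P x - poly_head (fun i => lim (fun n => a n i)) x k) * w).
    apply CV_mult; [|apply cv_const].
    apply CV_minus; [apply gP; lra|].
    apply poly_head_cv. intros i Hi. apply cv_lim, IH, Hi.
  - intro n.
    pose proof (pgf_head_bounds (a n) (g n) (ga n) (g1 n) x (S k) ltac:(lra)) as Hb.
    simpl in Hb.
    set (r := g n x - poly_head (a n) x k - a n k * x ^ k).
    assert (Hr : 0 <= r <= x * x ^ k) by (unfold r; lra).
    assert (Hdiff : (g n x - poly_head (a n) x k) * w - a n k = r * w).
    { unfold r. replace (a n k) with (a n k * (x ^ k * w)) at 1 by (rewrite Hw; ring). ring. }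
    assert (0 <= r * w <= x).
    { split; [nra|]. replace x with (x * x ^ k * w) by (rewrite Rmult_assoc, Hw; ring).
      apply Rmult_le_compat_r; lra. }
    rewrite Rabs_minus_sym, Hdiff, Rabs_pos_eq; lra.
Qed.

Lemma coef_cv k : exists l, Un_cv (fun n => a n k) l.
Proof.
  enough (all_below : forall K i, (i <= K)%nat -> exists l, Un_cv (fun n => a n i) l)
    by exact (all_below k k (le_n k)).
  induction K as [|K IH]; intros i Hi; apply coef_cv_step; intros j Hj; [lia|].
  apply IH. lia.
Qed.

Definition limit_law (k : nat) : R := lim (fun n => a n k).

Lemma limit_law_cv k : Un_cv (fun n => a n k) (limit_law k).
Proof. apply cv_lim, coef_cv. Qed.

Lemma limit_law_nonneg k : 0 <= limit_law k.
Proof.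
  exact (Rle_cv_lim (fun n => proj1 (ga n) k) (cv_const 0) (limit_law_cv k)).
Qed.

Lemma limit_law_pgf x : 0 <= x < 1 -> infinite_sum (fun k => limit_law k * x ^ k) (P x).
Proof.
  intro Hx.
  assert (bounds : forall k, poly_head limit_law x k <= P x <= poly_head limit_law x k + x ^ k).
  { intro k.
    assert (heads : Un_cv (fun n => poly_head (a n) x k) (poly_head limit_law x k))
      by (apply poly_head_cv; intros i _; apply limit_law_cv).
    pose proof (fun n => pgf_head_bounds (a n) (g n) (ga n) (g1 n) x k ltac:(lra)) as Hb.
    split.
    - exact (Rle_cv_lim (fun n => proj1 (Hb n)) heads (gP x ltac:(lra))).
    - exact (Rle_cv_lim (fun n => proj2 (Hb n)) (gP x ltac:(lra))
                        (CV_plus _ _ _ _ heads (cv_const _))). }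
  intros eps Heps.
  destruct (pow_lt_1_zero x ltac:(rewrite Rabs_pos_eq; lra) eps Heps) as [N HN].
  exists N. intros n Hn. unfold R_dist. rewrite <- poly_head_sum.
  specialize (bounds (S n)). specialize (HN (S n) ltac:(lia)).
  rewrite Rabs_pos_eq in HN by (apply pow_le; lra).
  apply Rabs_def1; lra.
Qed.

Lemma limit_law_is_pmf K :
  0 <= K -> (forall x, 0 <= x < 1 -> 1 - K * (1 - x) <= P x) -> is_pmf limit_law.
Proof.
  intros HK Plow. split; [exact limit_law_nonneg|].
  assert (mass_le_1 : forall N, sum_f_R0 limit_law N <= 1).
  { intro N.
    refine (Rle_cv_lim _ (sum_f_R0_cv a limit_law N (fun i _ => limit_law_cv i)) (cv_const 1)).
    intro n. rewrite <- (g1 n).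
    exact (sum_incr (a n) N _ (has_pgf_mass _ _ (ga n)) (proj1 (ga n))). }
  destruct (infinite_sum_bounded limit_law limit_law_nonneg 1 mass_le_1) as [T [HT HT1]].
  enough (1 <= T) by (replace 1 with T by lra; exact HT).
  apply (ge_1_of_lower_bounds T K); [exact (infinite_sum_nonneg _ limit_law_nonneg _ HT)|exact HK|].
  intros x Hx. apply (Rle_trans _ (P x)); [exact (Plow x Hx)|].
  apply (infinite_sum_le (fun k => limit_law k * x ^ k) limit_law); [|apply limit_law_pgf, Hx|exact HT].
  intro k. pose proof (pow_unit_interval x k ltac:(lra)). pose proof (limit_law_nonneg k). nra.
Qed.

(* The pgf of the limit law is P on all of [0,1]; at 1 both sides are 1. *)
Lemma pgf_limit_law x : is_pmf limit_law -> 0 <= x <= 1 -> pgf limit_law x = P x.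
Proof.
  intros Hpmf Hx. destruct (Rle_lt_or_eq_dec x 1 (proj2 Hx)) as [Hlt|Heq].
  - apply series_of_sum, limit_law_pgf. lra.
  - subst x. rewrite (pgf_at_1 _ Hpmf).
    apply (UL_sequence (fun n => g n 1)); [|apply gP; lra].
    apply (Un_cv_ext (fun _ => 1)); [intro n; symmetry; apply g1 | apply cv_const].
Qed.

End ContinuityTheorem.

(* Iterated compositions.  [above_identity G]: each G_i (i >= 1) is a
   nondecreasing map of [0,1] into itself lying above the identity and
   fixing 1 -- the shape of the pgf of a law with mean at most 1. *)
Definition above_identity (G : nat -> R -> R) : Prop :=
  forall i, (1 <= i)%nat ->
    (forall x, 0 <= x <= 1 -> x <= G i x <= 1) /\
    (forall x y, 0 <= x -> x <= y -> y <= 1 -> G i x <= G i y) /\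
    G i 1 = 1.

Lemma Gcomp_shift G a k x : Gcomp G a (S k) x = Gcomp G a k (G (a + k)%nat x).
Proof.
  revert a. induction k as [|k IH]; intro a; [simpl; rewrite Nat.add_0_r; reflexivity|].
  change (G a (Gcomp G (S a) (S k) x) = G a (Gcomp G (S a) k (G (a + S k)%nat x))).
  rewrite IH. do 3 f_equal. lia.
Qed.

Lemma Gbar_succ G j n x : (j <= n)%nat -> Gbar G (S j) (S n) x = Gbar G (S j) n (G (S n) x).
Proof.
  intro Hjn. unfold Gbar. replace (S (S n) - S j)%nat with (S (S n - S j)) by lia.
  rewrite Gcomp_shift. do 2 f_equal. lia.
Qed.

Lemma Gbar_empty G n x : Gbar G (S n) n x = x.
Proof. unfold Gbar. rewrite Nat.sub_diag. reflexivity. Qed.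

Section Compositions.
Variable G : nat -> R -> R.
Hypothesis HG : above_identity G.

Lemma Gcomp_range k : forall a x, (1 <= a)%nat -> 0 <= x <= 1 -> x <= Gcomp G a k x <= 1.
Proof.
  induction k as [|k IH]; intros a x Ha Hx; simpl; [lra|].
  pose proof (IH (S a) x ltac:(lia) Hx).
  pose proof (proj1 (HG a Ha) (Gcomp G (S a) k x) ltac:(lra)). lra.
Qed.

Lemma Gcomp_one k : forall a, (1 <= a)%nat -> Gcomp G a k 1 = 1.
Proof.
  induction k as [|k IH]; intros a Ha; simpl; [reflexivity|].
  rewrite IH by lia. apply (HG a Ha).
Qed.

Lemma Gcomp_step k : forall a x, (1 <= a)%nat -> 0 <= x <= 1 ->
  Gcomp G a k x <= Gcomp G a (S k) x.
Proof.
  induction k as [|k IH]; intros a x Ha Hx; [simpl; apply (HG a Ha); exact Hx|].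
  change (G a (Gcomp G (S a) k x) <= G a (Gcomp G (S a) (S k) x)).
  pose proof (Gcomp_range k (S a) x ltac:(lia) Hx).
  pose proof (Gcomp_range (S k) (S a) x ltac:(lia) Hx).
  apply (HG a Ha); [lra | apply IH; auto; lia | lra].
Qed.

Lemma Gbar_range j n x : 0 <= x <= 1 -> x <= Gbar G (S j) n x <= 1.
Proof. intro Hx. apply Gcomp_range; [lia | exact Hx]. Qed.

Lemma Gbar_one j n : Gbar G (S j) n 1 = 1.
Proof. apply Gcomp_one. lia. Qed.

Lemma Gbar_growing j x : 0 <= x <= 1 -> Un_growing (fun n => Gbar G (S j) n x).
Proof.
  intros Hx n. unfold Gbar. destruct (Nat.le_gt_cases j n) as [Hjn|Hjn].
  - replace (S (S n) - S j)%nat with (S (S n - S j)) by lia.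
    apply Gcomp_step; [lia | exact Hx].
  - replace (S (S n) - S j)%nat with (S n - S j)%nat by lia. lra.
Qed.

Definition Gbar_inf j x : R := lim (fun n => Gbar G (S j) n x).

Lemma Gbar_inf_cv j x : 0 <= x <= 1 -> Un_cv (fun n => Gbar G (S j) n x) (Gbar_inf j x).
Proof.
  intro Hx. apply cv_lim.
  destruct (growing_cv _ (Gbar_growing j x Hx)) as [L HL]; [|eauto].
  exists 1. intros z [n ->]. apply (Gbar_range j n x Hx).
Qed.

Lemma Gbar_le_inf j n x : 0 <= x <= 1 -> Gbar G (S j) n x <= Gbar_inf j x.
Proof. intro Hx. exact (growing_ineq _ _ (Gbar_growing j x Hx) (Gbar_inf_cv j x Hx) n). Qed.

Lemma Gbar_inf_range j x : 0 <= x <= 1 -> x <= Gbar_inf j x <= 1.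
Proof.
  intro Hx. split.
  - exact (Rle_trans _ _ _ (proj1 (Gbar_range j 0 x Hx)) (Gbar_le_inf j 0 x Hx)).
  - exact (Rle_cv_lim (fun n => proj2 (Gbar_range j n x Hx)) (Gbar_inf_cv j x Hx) (cv_const 1)).
Qed.

End Compositions.

Fixpoint sum_up (c : nat -> R) (a len : nat) : R :=
  match len with
  | O => 0
  | S l => c a + sum_up c (S a) l
  end.

Lemma sum_up_add c a l1 l2 : sum_up c a (l1 + l2) = sum_up c a l1 + sum_up c (a + l1) l2.
Proof.
  revert a. induction l1 as [|l1 IH]; intro a; simpl; [rewrite Nat.add_0_r; ring|].
  rewrite IH. replace (a + S l1)%nat with (S a + l1)%nat by lia. ring.
Qed.

Lemma sum_up_sum_f_R0 c a N : sum_up c a (S N) = sum_f_R0 (fun n => c (a + n)%nat) N.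
Proof.
  induction N as [|N IH]; [simpl; rewrite Nat.add_0_r; ring|].
  replace (S (S N)) with (S N + 1)%nat by lia.
  rewrite sum_up_add, IH. simpl. ring.
Qed.

Lemma sum_up_le c d a l :
  (forall i, (a <= i < a + l)%nat -> c i <= d i) -> sum_up c a l <= sum_up d a l.
Proof.
  revert a. induction l as [|l IH]; intros a H; simpl; [lra|].
  pose proof (H a ltac:(lia)). pose proof (IH (S a) (fun i Hi => H i ltac:(lia))). lra.
Qed.

Lemma sum_up_nonneg c a l : (forall i, (a <= i < a + l)%nat -> 0 <= c i) -> 0 <= sum_up c a l.
Proof.
  revert a. induction l as [|l IH]; intros a H; simpl; [lra|].
  pose proof (H a ltac:(lia)). pose proof (IH (S a) (fun i Hi => H i ltac:(lia))). lra.
Qed.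

Lemma sum_up_scal c k a l : sum_up (fun i => k * c i) a l = k * sum_up c a l.
Proof. revert a. induction l as [|l IH]; intro a; simpl; [ring|]. rewrite IH. ring. Qed.

Lemma prodR_from_1 f N : prodR f 1 N = prod_up f 1 N.
Proof. unfold prodR. simpl. rewrite Nat.sub_0_r. reflexivity. Qed.

Lemma prod_up_ext f g a l :
  (forall i, (a <= i < a + l)%nat -> f i = g i) -> prod_up f a l = prod_up g a l.
Proof.
  revert a. induction l as [|l IH]; intros a H; simpl; [reflexivity|].
  rewrite (H a), (IH (S a)); [reflexivity| |]; intros; try apply H; lia.
Qed.

Lemma prod_up_S f a l : prod_up f a (S l) = prod_up f a l * f (a + l)%nat.
Proof.
  revert a. induction l as [|l IH]; intro a; [simpl; rewrite Nat.add_0_r; ring|].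
  change (f a * prod_up f (S a) (S l) = f a * prod_up f (S a) l * f (a + S l)%nat).
  rewrite IH. replace (a + S l)%nat with (S a + l)%nat by lia. ring.
Qed.

Lemma prod_up_add f a l1 l2 : prod_up f a (l1 + l2) = prod_up f a l1 * prod_up f (a + l1) l2.
Proof.
  revert a. induction l1 as [|l1 IH]; intro a; simpl; [rewrite Nat.add_0_r; ring|].
  rewrite IH. replace (a + S l1)%nat with (S a + l1)%nat by lia. ring.
Qed.

Lemma prod_up_range f a l :
  (forall i, (a <= i < a + l)%nat -> 0 <= f i <= 1) -> 0 <= prod_up f a l <= 1.
Proof.
  revert a. induction l as [|l IH]; intros a H; simpl; [lra|].
  pose proof (H a ltac:(lia)). pose proof (IH (S a) (fun i Hi => H i ltac:(lia))). nra.
Qed.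

Lemma prod_up_mono f g a l :
  (forall i, (a <= i < a + l)%nat -> 0 <= f i <= g i /\ g i <= 1) ->
  prod_up f a l <= prod_up g a l.
Proof.
  revert a. induction l as [|l IH]; intros a H; simpl; [lra|].
  pose proof (H a ltac:(lia)).
  pose proof (IH (S a) (fun i Hi => H i ltac:(lia))).
  assert (0 <= prod_up f (S a) l <= 1).
  { apply prod_up_range. intros i Hi. pose proof (H i ltac:(lia)). lra. }
  nra.
Qed.

Lemma prod_up_lower f c a l :
  (forall i, (a <= i < a + l)%nat -> 0 <= f i <= 1 /\ 1 - c i <= f i /\ 0 <= c i) ->
  1 - sum_up c a l <= prod_up f a l.
Proof.
  revert a. induction l as [|l IH]; intros a H; simpl; [lra|].
  pose proof (H a ltac:(lia)).
  pose proof (IH (S a) (fun i Hi => H i ltac:(lia))).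
  pose proof (prod_up_range f (S a) l (fun i Hi => proj1 (H i ltac:(lia)))).
  nra.
Qed.

Lemma prod_up_cv (f : nat -> nat -> R) (L : nat -> R) a l :
  (forall i, (a <= i < a + l)%nat -> Un_cv (fun n => f n i) (L i)) ->
  Un_cv (fun n => prod_up (f n) a l) (prod_up L a l).
Proof.
  revert a. induction l as [|l IH]; intros a H; simpl; [apply cv_const|].
  apply CV_mult; [apply H; lia | apply IH; intros; apply H; lia].
Qed.

Lemma cv_lipschitz_image (h : R -> R) u l K :
  0 <= K -> (forall n, Rabs (h (u n) - h l) <= K * Rabs (u n - l)) ->
  Un_cv u l -> Un_cv (fun n => h (u n)) (h l).
Proof.
  intros HK Hlip Hu eps Heps.
  destruct (Hu (eps / (K + 1))) as [N HN]; [apply Rdiv_lt_0_compat; lra|].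
  exists N. intros n Hn. specialize (HN n Hn). unfold R_dist in *.
  apply (Rle_lt_trans _ _ _ (Hlip n)).
  apply (Rle_lt_trans _ (K * (eps / (K + 1)))); [apply Rmult_le_compat_l; lra|].
  assert (Hid : K * (eps / (K + 1)) = eps - eps / (K + 1)) by (field; lra).
  pose proof (Rdiv_lt_0_compat eps (K + 1) Heps ltac:(lra)). lra.
Qed.

Lemma cv_squeeze_approx (u w : nat -> R) L :
  Un_cv w L -> (forall n, u n <= w n) ->
  (forall d, 0 < d -> exists (v : nat -> R) (l : R) (N : nat),
     Un_cv v l /\ L - d <= l /\ forall n, (N <= n)%nat -> v n - d <= u n) ->
  Un_cv u L.
Proof.
  intros Hw Huw Hlow eps Heps.
  destruct (Hlow (eps / 3) ltac:(lra)) as [v [l [N0 [Hv [Hl Hvu]]]]].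
  destruct (Hw eps Heps) as [N1 HN1].
  destruct (Hv (eps / 3) ltac:(lra)) as [N2 HN2].
  exists (N0 + N1 + N2)%nat. intros n Hn.
  specialize (HN1 n ltac:(lia)). specialize (HN2 n ltac:(lia)).
  specialize (Hvu n ltac:(lia)). specialize (Huw n).
  unfold R_dist in *. apply Rabs_def2 in HN1. apply Rabs_def2 in HN2.
  apply Rabs_def1; lra.
Qed.

Section BranchingWithImmigration.
Variables (p q : nat -> nat -> R) (rho m1 : nat -> R) (M : R).
Hypothesis Hp : forall n, (1 <= n)%nat -> is_pmf (p n).
Hypothesis Hq : forall n, (1 <= n)%nat -> is_pmf (q n).
Hypothesis Hrho : forall n, (1 <= n)%nat ->
  infinite_sum (fun k => INR k * p n k) (rho n) /\ rho n <= 1.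
Hypothesis Hm1 : forall n, (1 <= n)%nat -> infinite_sum (fun k => INR k * q n k) (m1 n).
Hypothesis HM : infinite_sum (fun n => m1 (S n)) M.

Local Notation G := (fun i => pgf (p i)).
Local Notation H := (fun j => pgf (q j)).

Lemma m1_nonneg j : (1 <= j)%nat -> 0 <= m1 j.
Proof. intro Hj. exact (mean_nonneg _ _ (Hq j Hj) (Hm1 j Hj)). Qed.

Lemma M_nonneg : 0 <= M.
Proof. exact (infinite_sum_nonneg _ (fun k => m1_nonneg (S k) ltac:(lia)) _ HM). Qed.

(* Mean at most one puts G_i above the identity: 1 - G_i(x) <= rho_i (1 - x). *)
Lemma offspring_above_identity : above_identity G.
Proof.
  intros i Hi. pose proof (has_pgf_of_pmf _ (Hp i Hi)) as HG.
  pose proof (pgf_at_1 _ (Hp i Hi)) as G1.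
  destruct (Hrho i Hi) as [Hmean Hle1].
  pose proof (mean_nonneg _ _ (Hp i Hi) Hmean).
  split; [|split; [exact (has_pgf_mono _ _ HG) | exact G1]].
  intros x Hx. split; [|exact (proj2 (has_pgf_range _ _ HG x G1 Hx))].
  pose proof (has_pgf_mean_bound _ _ HG _ x 1 Hmean ltac:(lra) ltac:(lra) ltac:(lra)).
  simpl in *. nra.
Qed.

Lemma immigration_range j y : (1 <= j)%nat -> 0 <= y <= 1 -> 0 <= H j y <= 1.
Proof. intro Hj. exact (has_pgf_range _ _ (has_pgf_of_pmf _ (Hq j Hj)) y (pgf_at_1 _ (Hq j Hj))). Qed.

Lemma immigration_mono j x y : (1 <= j)%nat -> 0 <= x -> x <= y -> y <= 1 -> H j x <= H j y.
Proof. intro Hj. exact (has_pgf_mono _ _ (has_pgf_of_pmf _ (Hq j Hj)) x y). Qed.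

Lemma immigration_lipschitz j x y : (1 <= j)%nat -> 0 <= x <= 1 -> 0 <= y <= 1 ->
  Rabs (H j x - H j y) <= m1 j * Rabs (x - y).
Proof.
  intros Hj Hx Hy. pose proof (has_pgf_of_pmf _ (Hq j Hj)) as HH.
  pose proof (m1_nonneg j Hj).
  destruct (Rle_dec x y) as [Hxy|Hxy].
  - pose proof (has_pgf_mean_bound _ _ HH _ x y (Hm1 j Hj) ltac:(lra) Hxy ltac:(lra)).
    pose proof (immigration_mono j x y Hj ltac:(lra) Hxy ltac:(lra)).
    rewrite Rabs_minus_sym, (Rabs_minus_sym x), !Rabs_pos_eq by lra. simpl in *. lra.
  - pose proof (has_pgf_mean_bound _ _ HH _ y x (Hm1 j Hj) ltac:(lra) ltac:(lra) ltac:(lra)).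
    pose proof (immigration_mono j y x Hj ltac:(lra) ltac:(lra) ltac:(lra)).
    rewrite !Rabs_pos_eq by lra. simpl in *. lra.
Qed.

Lemma immigration_lower j y : (1 <= j)%nat -> 0 <= y <= 1 -> 1 - m1 j * (1 - y) <= H j y.
Proof.
  intros Hj Hy.
  pose proof (has_pgf_mean_bound _ _ (has_pgf_of_pmf _ (Hq j Hj)) _ y 1 (Hm1 j Hj)
                ltac:(lra) ltac:(lra) ltac:(lra)) as Hb.
  rewrite (pgf_at_1 _ (Hq j Hj)) in Hb. lra.
Qed.

Lemma immigration_factor j y : (1 <= j)%nat -> 0 <= y <= 1 ->
  0 <= H j y <= 1 /\ 1 - m1 j <= H j y /\ 0 <= m1 j.
Proof.
  intros Hj Hy. pose proof (immigration_range j y Hj Hy).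
  pose proof (immigration_lower j y Hj Hy). pose proof (m1_nonneg j Hj).
  split; [lra | split; [nra | lra]].
Qed.

Definition Xn_pgf (n : nat) (x : R) : R := prod_up (fun j => H j (Gbar G (S j) n x)) 1 n.

Lemma Xn_pgf_at_1 n : Xn_pgf n 1 = 1.
Proof.
  unfold Xn_pgf. transitivity (prod_up (fun _ => 1) 1 n).
  - apply prod_up_ext. intros [|j] Hj; [lia|].
    rewrite (Gbar_one _ offspring_above_identity). apply pgf_at_1, Hq. lia.
  - generalize 1%nat. induction n as [|n IH]; intro a; simpl; [reflexivity|]. rewrite IH. ring.
Qed.

Lemma Xn_pgf_succ n x : Xn_pgf (S n) x = Xn_pgf n (G (S n) x) * H (S n) x.
Proof.
  unfold Xn_pgf. rewrite prod_up_S. f_equal.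
  - apply prod_up_ext. intros [|j] Hj; [lia|]. rewrite Gbar_succ by lia. reflexivity.
  - simpl. rewrite Gbar_empty. reflexivity.
Qed.

(* Branching step: X_n given X_{n-1} = m has law (p n)^{*m} * q n, with pgf
   G_n(x)^m H_n(x); mixing over the law of X_{n-1} composes with G_n. *)
Lemma law_has_pgf n : has_pgf (law p q n) (Xn_pgf n).
Proof.
  induction n as [|n IH].
  - exact (has_pgf_ext _ _ _ (fun _ _ => eq_refl) has_pgf_delta0).
  - pose proof (Hp (S n) ltac:(lia)) as p_pmf. pose proof (Hq (S n) ltac:(lia)) as q_pmf.
    apply (has_pgf_ext _ (fun x => Xn_pgf n (G (S n) x) * H (S n) x));
      [intros; symmetry; apply Xn_pgf_succ|].
    apply (has_pgf_mixture (law p q n) (fun m => conv (convpow (p (S n)) m) (q (S n)))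
             (Xn_pgf n) (fun m x => G (S n) x ^ m * H (S n) x)).
    + exact IH.
    + intro m. apply has_pgf_conv; [apply has_pgf_convpow|]; apply has_pgf_of_pmf; assumption.
    + intro m. simpl. rewrite !pgf_at_1, pow1 by assumption. ring.
    + intros x Hx.
      pose proof (has_pgf_range _ _ (has_pgf_of_pmf _ p_pmf) x (pgf_at_1 _ p_pmf) Hx) as HGx.
      apply (infinite_sum_ext (fun m => H (S n) x * (law p q n m * G (S n) x ^ m)));
        [intro m; ring|].
      rewrite Rmult_comm. apply infinite_sum_scal, (proj2 IH _ HGx).
Qed.

Definition partial_product (N : nat) (x : R) : R :=
  prod_up (fun j => H j (Gbar_inf G j x)) 1 N.

Definition limit_pgf (x : R) : R := lim (fun N => partial_product N x).

Lemma partial_product_range N x : 0 <= x <= 1 -> 0 <= partial_product N x <= 1.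
Proof.
  intro Hx. apply prod_up_range. intros i Hi. apply immigration_range; [lia|].
  pose proof (Gbar_inf_range G offspring_above_identity i x Hx). lra.
Qed.

Lemma partial_product_decreasing x : 0 <= x <= 1 -> Un_decreasing (fun N => partial_product N x).
Proof.
  intros Hx N. unfold partial_product. rewrite prod_up_S.
  pose proof (partial_product_range N x Hx).
  pose proof (Gbar_inf_range G offspring_above_identity (1 + N) x Hx).
  pose proof (immigration_range (1 + N) (Gbar_inf G (1 + N) x) ltac:(lia) ltac:(lra)).
  unfold partial_product in *. nra.
Qed.

Lemma partial_product_cv x : 0 <= x <= 1 -> Un_cv (fun N => partial_product N x) (limit_pgf x).
Proof.
  intro Hx. apply cv_lim.
  destruct (decreasing_cv _ (partial_product_decreasing x Hx)) as [L HL]; [|eauto].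
  exists 0. intros z [N ->]. unfold opp_seq. pose proof (partial_product_range N x Hx). lra.
Qed.

Lemma immigration_means_le n : sum_up m1 1 n <= M.
Proof.
  destruct n as [|n]; [exact M_nonneg|]. rewrite sum_up_sum_f_R0.
  exact (sum_incr _ n M HM (fun k => m1_nonneg (1 + k) ltac:(lia))).
Qed.

Lemma immigration_means_cv : Un_cv (fun N => sum_up m1 1 N) M.
Proof.
  intros eps Heps. destruct (HM eps Heps) as [N HN]. exists (S N). intros [|n] Hn; [lia|].
  rewrite sum_up_sum_f_R0. apply HN. lia.
Qed.

(* No mass escapes: g(x) >= 1 - M (1 - x), via prod (1 - c_j) >= 1 - sum c_j. *)
Lemma limit_pgf_lower x : 0 <= x <= 1 -> 1 - M * (1 - x) <= limit_pgf x.
Proof.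
  intro Hx. refine (Rle_cv_lim _ (cv_const _) (partial_product_cv x Hx)). intro N.
  apply (Rle_trans _ (1 - sum_up (fun j => m1 j * (1 - Gbar_inf G j x)) 1 N));
    [|apply prod_up_lower].
  - enough (sum_up (fun j => m1 j * (1 - Gbar_inf G j x)) 1 N <= M * (1 - x)) by lra.
    apply (Rle_trans _ (sum_up (fun j => (1 - x) * m1 j) 1 N)).
    + apply sum_up_le. intros i Hi.
      pose proof (Gbar_inf_range G offspring_above_identity i x Hx).
      pose proof (m1_nonneg i ltac:(lia)). nra.
    + rewrite sum_up_scal. pose proof (immigration_means_le N). nra.
  - intros i Hi. pose proof (Gbar_inf_range G offspring_above_identity i x Hx).
    pose proof (m1_nonneg i ltac:(lia)).
    pose proof (immigration_range i (Gbar_inf G i x) ltac:(lia) ltac:(lra)).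
    pose proof (immigration_lower i (Gbar_inf G i x) ltac:(lia) ltac:(lra)). nra.
Qed.

(* Since Gbar_{j+1,n} <= Gbar_{j+1,oo} and H_j is nondecreasing, g_n <= the
   n-th partial product. *)
Lemma Xn_pgf_le_partial n x : 0 <= x <= 1 -> Xn_pgf n x <= partial_product n x.
Proof.
  intro Hx. apply prod_up_mono. intros i Hi.
  pose proof (Gbar_range G offspring_above_identity i n x Hx).
  pose proof (Gbar_inf_range G offspring_above_identity i x Hx).
  pose proof (Gbar_le_inf G offspring_above_identity i n x Hx).
  pose proof (immigration_range i (Gbar_inf G i x) ltac:(lia) ltac:(lra)).
  pose proof (immigration_range i (Gbar G (S i) n x) ltac:(lia) ltac:(lra)).
  pose proof (immigration_mono i (Gbar G (S i) n x) (Gbar_inf G i x) ltac:(lia) ltac:(lra) ltac:(lra) ltac:(lra)). lra.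
Qed.

(* Beyond N0, the factors of g_n multiply to at least 1 - sum_{j>N0} m1 j. *)
Lemma Xn_pgf_lower_tail N0 n x : (N0 <= n)%nat -> 0 <= x <= 1 ->
  prod_up (fun j => H j (Gbar G (S j) n x)) 1 N0 - (M - sum_up m1 1 N0) <= Xn_pgf n x.
Proof.
  intros Hn Hx.
  set (head := prod_up (fun j => H j (Gbar G (S j) n x)) 1 N0).
  set (tail := prod_up (fun j => H j (Gbar G (S j) n x)) (1 + N0) (n - N0)).
  assert (split : Xn_pgf n x = head * tail).
  { unfold Xn_pgf, head, tail. rewrite <- prod_up_add. f_equal. lia. }
  assert (factor : forall i, (1 <= i)%nat -> 0 <= H i (Gbar G (S i) n x) <= 1 /\
                     1 - m1 i <= H i (Gbar G (S i) n x) /\ 0 <= m1 i).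
  { intros i Hi. apply immigration_factor; [exact Hi|].
    pose proof (Gbar_range G offspring_above_identity i n x Hx). lra. }
  assert (head_range : 0 <= head <= 1)
    by (apply prod_up_range; intros i Hi; apply factor; lia).
  assert (tail_means : 0 <= sum_up m1 (1 + N0) (n - N0) <= M - sum_up m1 1 N0).
  { pose proof (immigration_means_le n). pose proof (sum_up_add m1 1 N0 (n - N0)) as Hadd.
    replace (N0 + (n - N0))%nat with n in Hadd by lia.
    pose proof (sum_up_nonneg m1 (1 + N0) (n - N0) (fun i Hi => m1_nonneg i ltac:(lia))).
    lra. }
  assert (tail_lower : 1 - sum_up m1 (1 + N0) (n - N0) <= tail)
    by (apply prod_up_lower; intros i Hi; apply factor; lia).
  rewrite split. nra.
Qed.

Lemma Xn_pgf_cv x : 0 <= x <= 1 -> Un_cv (fun n => Xn_pgf n x) (limit_pgf x).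
Proof.
  intro Hx.
  apply (cv_squeeze_approx _ (fun n => partial_product n x) _ (partial_product_cv x Hx)
           (fun n => Xn_pgf_le_partial n x Hx)).
  intros d Hd.
  destruct (immigration_means_cv d Hd) as [N0 HN0]. specialize (HN0 N0 (le_n N0)).
  pose proof (immigration_means_le N0) as means_le. unfold R_dist in HN0.
  rewrite Rabs_left1 in HN0 by lra.
  exists (fun n => prod_up (fun j => H j (Gbar G (S j) n x)) 1 N0), (partial_product N0 x), N0.
  split; [|split].
  - apply prod_up_cv. intros i Hi.
    apply (cv_lipschitz_image (H i) _ _ (m1 i) (m1_nonneg i ltac:(lia))).
    + intro n. apply immigration_lipschitz; [lia| |].
      * pose proof (Gbar_range G offspring_above_identity i n x Hx). lra.
      * pose proof (Gbar_inf_range G offspring_above_identity i x Hx). lra.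
    + exact (Gbar_inf_cv G offspring_above_identity i x Hx).
  - pose proof (decreasing_ineq _ _ (partial_product_decreasing x Hx) (partial_product_cv x Hx) N0).
    lra.
  - intros n Hn. pose proof (Xn_pgf_lower_tail N0 n x Hn Hx). lra.
Qed.

End BranchingWithImmigration.

Theorem theorem6
  (p q : nat -> nat -> R)      (* p n = law of xi_{n,1}, q n = law of eps_n *)
  (rho m1 : nat -> R) (r : R)
  (Hp : forall n, (1 <= n)%nat -> is_pmf (p n))
  (Hq : forall n, (1 <= n)%nat -> is_pmf (q n))
  (Hrho : forall n, (1 <= n)%nat ->
     infinite_sum (fun k => INR k * p n k) (rho n) /\ rho n <= 1)
  (Hm1 : forall n, (1 <= n)%nat -> infinite_sum (fun k => INR k * q n k) (m1 n))
  (Hprod : Un_cv (fun N => prodR rho 2 N) r)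
  (Hr : 0 < r < 1)
  (Hsum : exists M, infinite_sum (fun n => m1 (S n)) M) :
  (forall j x, 0 <= x <= 1 ->
     exists L, Un_cv (fun n => Gbar (fun i => pgf (p i)) (S j) n x) L) /\
  exists y : nat -> R,
    is_pmf y /\
    (forall k, Un_cv (fun n => law p q n k) (y k)) /\
    (forall x, 0 <= x <= 1 ->
       Un_cv (fun N => prodR (fun j =>
                 pgf (q j) (lim (fun n => Gbar (fun i => pgf (p i)) (S j) n x))) 1 N)
             (pgf y x)).
Proof.
  destruct Hsum as [M HM].
  pose proof (offspring_above_identity p rho Hp Hrho) as HG.
  split; [intros j x Hx; exists (Gbar_inf (fun i => pgf (p i)) j x); exact (Gbar_inf_cv _ HG j x Hx)|].
  pose proof (law_has_pgf p q Hp Hq) as law_pgf.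
  pose proof (Xn_pgf_at_1 p q rho Hp Hq Hrho) as law_pgf_1.
  pose proof (Xn_pgf_cv p q rho m1 M Hp Hq Hrho Hm1 HM) as law_pgf_cv.
  assert (y_pmf : is_pmf (limit_law (law p q))).
  { apply (limit_law_is_pmf _ _ _ law_pgf law_pgf_1 law_pgf_cv M).
    - exact (M_nonneg q m1 M Hq Hm1 HM).
    - intros x Hx. apply (limit_pgf_lower p q rho m1 M Hp Hq Hrho Hm1 HM). lra. }
  exists (limit_law (law p q)).
  split; [exact y_pmf|]. split; [exact (limit_law_cv _ _ _ law_pgf law_pgf_1 law_pgf_cv)|].
  intros x Hx.
  rewrite (pgf_limit_law _ _ _ law_pgf law_pgf_1 law_pgf_cv x y_pmf Hx).
  apply (Un_cv_ext (fun N => partial_product p q N x)); [intro N; symmetry; apply prodR_from_1|].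
  exact (partial_product_cv p q rho Hp Hq Hrho x Hx).
Qed.
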